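(* Let $n,m\in\mathbb{N}$, $f\in C[0,1]$, and let $\overline{B}_{n,m}$ be the composite Bernstein operator defined in the context. Then for every $k\in\{1,\dots,m\}$ and every $x\in\left[\frac{k-1}{m},\frac{k}{m}\right]$, $$ |\overline{B}_{n,m}(f;x)-f(x)|\le \frac32\,\omega_2\left(f;\sqrt{\frac{\left(x-\frac{k-1}{m}\right)\left(\frac{k}{m}-x\right)}{n}}\right). $$
   Context: For $a<b$, $f:[a,b]\to\mathbb{R}$ and $n\in\mathbb{N}$, the Bernstein polynomial on $[a,b]$ is $B_n^{[a,b]}(f;x)=\frac{1}{(b-a)^n}\sum_{i=0}^n\binom{n}{i}(x-a)^i(b-x)^{n-i}f\left(a+i\frac{b-a}{n}\right)$. For $m\in\mathbb{N}$ and $1\le k\le m$ put $B_{n,k}(f;x):=B_n^{[\frac{k-1}{m},\frac{k}{m}]}(f;x)$, and define $\overline{B}_{n,m}(f;x):=B_{n,k}(f;x)$ if $x\in\left[\frac{k-1}{m},\frac{k}{m}\right]$ (well defined at the break points, where both pieces equal $f(k/m)$). The second-order modulus of continuity on $[0,1]$ is $\omega_2(f,\delta)=\sup\{|f(x-h)-2f(x)+f(x+h)|: x\pm h\in[0,1],\ |h|\le\delta\}$ for $\delta\ge0$. *)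

From Stdlib Require Import Reals Lra Lia ZArith.
From Coquelicot Require Import Coquelicot.
Open Scope R_scope.

Definition bernstein_ab (a b : R) (n : nat) (f : R -> R) (x : R) : R :=
  / (b - a) ^ n *
  sum_f_R0 (fun i => Binomial.C n i * (x - a) ^ i * (b - x) ^ (n - i)
                     * f (a + INR i * ((b - a) / INR n))) n.

Definition B_nk (n m k : nat) (f : R -> R) (x : R) : R :=
  bernstein_ab ((INR k - 1) / INR m) (INR k / INR m) n f x.

(* Index of the piece containing x: for x in [0,1), k = floor(m x) + 1;
   for x = 1, k = m.  (At break points both pieces agree, as noted in the paper.) *)
Definition piece_index (m : nat) (x : R) : nat :=
  Nat.min m (Z.to_nat (up (INR m * x))).

Definition Bbar (n m : nat) (f : R -> R) (x : R) : R :=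
  B_nk n m (piece_index m x) f x.

Definition omega2_set (f : R -> R) (delta : R) (r : R) : Prop :=
  exists x h : R, 0 <= x - h /\ x - h <= 1 /\ 0 <= x + h /\ x + h <= 1 /\
    Rabs h <= delta /\ r = Rabs (f (x - h) - 2 * f x + f (x + h)).

Definition omega2 (f : R -> R) (delta : R) : R :=
  real (Lub_Rbar (omega2_set f delta)).

Definition continuous_on_01 (f : R -> R) : Prop :=
  forall x, 0 <= x <= 1 -> forall eps, 0 < eps -> exists delta, 0 < delta /\
    forall y, 0 <= y <= 1 -> Rabs (y - x) < delta -> Rabs (f y - f x) < eps.

(* Fix the piece [a,b] containing x and set h^2 = (x-a)(b-x)/n, w = omega_2(f,h).
   A discrete maximum principle shows that on every [s,t] containing x, f(x) lies below
   the chord of f by at most w (1 + (x-s)(t-x)/(2h^2)); a supporting-line argument then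
   yields c with f(y) <= f(x) + w + c (y-x) + w (y-x)^2 / (2h^2) on [a,b], and likewise
   for -f. The Bernstein operator on [a,b] is positive, reproduces affine functions and
   sends (y-x)^2 to (x-a)(b-x)/n = h^2 at x, so |B f(x) - f(x)| <= w + w/2. *)

From Stdlib Require Import Reals Lra Lia ZArith.
From Coquelicot Require Import Coquelicot.
Open Scope R_scope.

Lemma sum_f_R0_lin3 (A B D : nat -> R) (p q r : R) (N : nat) :
  sum_f_R0 (fun i => p * A i + q * B i + r * D i) N =
  p * sum_f_R0 A N + q * sum_f_R0 B N + r * sum_f_R0 D N.
Proof. induction N as [|N IH]; simpl; [ring | rewrite IH; ring]. Qed.

Lemma C_succ_mul_INR (n j : nat) : (j <= n)%nat ->
  Binomial.C (S n) (S j) * INR (S j) = INR (S n) * Binomial.C n j.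
Proof.
  intros Hj. unfold Binomial.C.
  replace (S n - S j)%nat with (n - j)%nat by lia.
  rewrite !fact_simpl, !mult_INR.
  assert (H1 := INR_fact_neq_0 n). assert (H2 := INR_fact_neq_0 j).
  assert (H3 := INR_fact_neq_0 (n - j)).
  assert (H4 : INR (S j) <> 0) by (apply not_0_INR; lia).
  field. repeat split; auto.
Qed.

Lemma C_ge0 (n i : nat) : 0 <= Binomial.C n i.
Proof.
  unfold Binomial.C. apply Rlt_le, Rdiv_lt_0_compat.
  - apply lt_0_INR, lt_O_fact.
  - apply Rmult_lt_0_compat; apply lt_0_INR, lt_O_fact.
Qed.

Lemma binomial_first_moment (u v : R) (n : nat) :
  sum_f_R0 (fun i => Binomial.C n i * u ^ i * v ^ (n - i) * INR i) n
  = INR n * u * (u + v) ^ pred n.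
Proof.
  destruct n as [|n]; [simpl; ring|].
  rewrite decomp_sum by lia. simpl pred.
  rewrite binomial, scal_sum, Rmult_0_r, Rplus_0_l.
  apply sum_eq. intros j Hj.
  replace (S n - S j)%nat with (n - j)%nat by lia.
  transitivity ((Binomial.C (S n) (S j) * INR (S j)) * u ^ S j * v ^ (n - j)); [ring|].
  rewrite C_succ_mul_INR by exact Hj. simpl pow. ring.
Qed.

Lemma binomial_second_moment (u v : R) (n : nat) :
  sum_f_R0 (fun i => Binomial.C n i * u ^ i * v ^ (n - i) * INR i * INR i) n
  = INR n * u * (INR (pred n) * u * (u + v) ^ pred (pred n) + (u + v) ^ pred n).
Proof.
  destruct n as [|n]; [simpl; ring|].
  rewrite decomp_sum by lia. simpl pred.
  rewrite <- binomial_first_moment, binomial, <- sum_plus, scal_sum.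
  rewrite !Rmult_0_r, Rplus_0_l.
  apply sum_eq. intros j Hj.
  replace (S n - S j)%nat with (n - j)%nat by lia.
  transitivity ((Binomial.C (S n) (S j) * INR (S j)) * u ^ S j * v ^ (n - j) * INR (S j));
    [ring|].
  rewrite C_succ_mul_INR by exact Hj. rewrite !S_INR. simpl pow. ring.
Qed.

Definition bernstein_node (a b : R) (n i : nat) : R := a + INR i * ((b - a) / INR n).

Definition bernstein_weight (a b : R) (n i : nat) (x : R) : R :=
  Binomial.C n i * (x - a) ^ i * (b - x) ^ (n - i).

Lemma bernstein_abE (a b : R) (n : nat) (F : R -> R) (x : R) :
  bernstein_ab a b n F x =
  / (b - a) ^ n * sum_f_R0 (fun i => bernstein_weight a b n i x * F (bernstein_node a b n i)) n.
Proof. reflexivity. Qed.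

Lemma bernstein_weight_ge0 (a b x : R) (n i : nat) :
  a <= x <= b -> 0 <= bernstein_weight a b n i x.
Proof.
  intros Hx. unfold bernstein_weight.
  apply Rmult_le_pos; [apply Rmult_le_pos|]; [apply C_ge0 | apply pow_le; lra | apply pow_le; lra].
Qed.

Lemma bernstein_node_in (a b : R) (n i : nat) : (1 <= n)%nat -> a <= b -> (i <= n)%nat ->
  a <= bernstein_node a b n i <= b.
Proof.
  intros Hn Hab Hi. unfold bernstein_node.
  assert (Hn0 : 0 < INR n) by (apply lt_0_INR; lia).
  assert (Hstep : 0 <= (b - a) / INR n) by (apply Rdiv_le_0_compat; lra).
  assert (Hin : INR i * ((b - a) / INR n) <= INR n * ((b - a) / INR n))
    by (apply Rmult_le_compat_r; [exact Hstep | apply le_INR, Hi]).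
  replace (INR n * ((b - a) / INR n)) with (b - a) in Hin by (field; lra).
  assert (0 <= INR i * ((b - a) / INR n)) by (apply Rmult_le_pos; [apply pos_INR | exact Hstep]).
  lra.
Qed.

Lemma bernstein_ab_ext (F G : R -> R) (a b x : R) (n : nat) : (1 <= n)%nat -> a <= b ->
  (forall y, a <= y <= b -> F y = G y) ->
  bernstein_ab a b n F x = bernstein_ab a b n G x.
Proof.
  intros Hn Hab HFG. rewrite !bernstein_abE. f_equal. apply sum_eq. intros i Hi.
  rewrite HFG; [reflexivity | apply bernstein_node_in; auto].
Qed.

Lemma bernstein_ab_le (F G : R -> R) (a b x : R) (n : nat) :
  (1 <= n)%nat -> a < b -> a <= x <= b ->
  (forall y, a <= y <= b -> F y <= G y) ->
  bernstein_ab a b n F x <= bernstein_ab a b n G x.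
Proof.
  intros Hn Hab Hx HFG. rewrite !bernstein_abE.
  apply Rmult_le_compat_l; [apply Rlt_le, Rinv_0_lt_compat, pow_lt; lra|].
  apply sum_Rle. intros i Hi.
  apply Rmult_le_compat_l; [apply bernstein_weight_ge0, Hx|].
  apply HFG, bernstein_node_in; auto; lra.
Qed.

Lemma bernstein_ab_opp (F : R -> R) (a b x : R) (n : nat) :
  bernstein_ab a b n (fun y => - F y) x = - bernstein_ab a b n F x.
Proof.
  rewrite !bernstein_abE, Ropp_mult_distr_r. f_equal.
  set (W := fun i => bernstein_weight a b n i x * F (bernstein_node a b n i)).
  replace (- sum_f_R0 W n) with (-1 * sum_f_R0 W n) by ring.
  rewrite scal_sum. apply sum_eq. intros i _. unfold W. ring.
Qed.

Lemma bernstein_ab_left (F : R -> R) (a b : R) (n : nat) : (1 <= n)%nat -> a < b ->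
  bernstein_ab a b n F a = F a.
Proof.
  intros Hn Hab. rewrite bernstein_abE, decomp_sum by lia.
  rewrite sum_eq_R0; [|intros i _; unfold bernstein_weight; rewrite Rminus_diag; simpl; ring].
  unfold bernstein_weight, bernstein_node. rewrite C_n_0, Nat.sub_0_r.
  replace (a + INR 0 * ((b - a) / INR n)) with a by (simpl; ring).
  field. apply pow_nonzero. lra.
Qed.

Lemma bernstein_ab_right (F : R -> R) (a b : R) (n : nat) : (1 <= n)%nat -> a < b ->
  bernstein_ab a b n F b = F b.
Proof.
  intros Hn Hab. rewrite bernstein_abE.
  destruct n as [|n]; [lia|]. simpl sum_f_R0 at 1.
  rewrite sum_eq_R0; [|intros i Hi; unfold bernstein_weight; rewrite Rminus_diag,
    (pow_i (S n - i)) by lia; ring].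
  unfold bernstein_weight, bernstein_node. rewrite C_n_n, Nat.sub_diag.
  replace (a + INR (S n) * ((b - a) / INR (S n))) with b by (field; apply not_0_INR; lia).
  field. apply pow_nonzero. lra.
Qed.
Lemma bernstein_ab_quadratic (p q r a b x : R) (n : nat) : (1 <= n)%nat -> a < b ->
  bernstein_ab a b n (fun y => p + q * (y - x) + r * (y - x) ^ 2) x
  = p + r * ((x - a) * (b - x) / INR n).
Proof.
  intros Hn Hab. rewrite bernstein_abE.
  set (W := fun i => bernstein_weight a b n i x).
  assert (HS0 : sum_f_R0 W n = (b - a) ^ n).
  { unfold W, bernstein_weight. rewrite <- binomial. f_equal. ring. }
  assert (HS1 : sum_f_R0 (fun i => W i * INR i) n = INR n * (x - a) * (b - a) ^ pred n).
  { unfold W, bernstein_weight. rewrite binomial_first_moment. do 2 f_equal. ring. }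
  assert (HS2 : sum_f_R0 (fun i => W i * INR i * INR i) n
    = INR n * (x - a) * (INR (pred n) * (x - a) * (b - a) ^ pred (pred n) + (b - a) ^ pred n)).
  { unfold W, bernstein_weight. rewrite binomial_second_moment.
    replace (x - a + (b - x)) with (b - a) by ring. reflexivity. }
  set (d := (b - a) / INR n).
  transitivity (/ (b - a) ^ n * sum_f_R0 (fun i =>
      (p - q * (x - a) + r * (x - a) ^ 2) * W i + (q * d - 2 * r * (x - a) * d) * (W i * INR i)
      + (r * d ^ 2) * (W i * INR i * INR i)) n).
  { f_equal. apply sum_eq. intros i _. unfold bernstein_node, W. fold d. ring. }
  rewrite sum_f_R0_lin3, HS0, HS1, HS2. unfold d.
  destruct n as [|[|n]]; [lia | simpl; field; lra |].
  assert (0 <= INR n) by apply pos_INR.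
  simpl pred. rewrite !S_INR. simpl pow. field. assert ((b - a) ^ n <> 0) by (apply pow_nonzero; lra). repeat split; lra.
Qed.

Section DiscreteMaximumPrinciple.

Variables (H : R -> R) (s t h w M : R).
Hypothesis h_pos : 0 < h.
Hypothesis H_le_M : forall y, s <= y <= t -> H y <= M.
Hypotheses (Hs_le0 : H s <= 0) (Ht_le0 : H t <= 0).
Hypothesis long_step : forall z, s <= z - h -> z + h <= t ->
  0 <= H (z - h) - 2 * H z + H (z + h).
Hypothesis short_step : forall z u, 0 <= u <= h -> s <= z - u -> z + u <= t ->
  - w <= H (z - u) - 2 * H z + H (z + u).

Lemma max_near_boundary_le (z : R) : s <= z <= t -> H z = M ->
  z - s <= h \/ t - z <= h -> M <= w.
Proof.
  intros Hz HzM Hnear.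
  destruct (Rle_dec (z - s) (t - z)) as [Hl | Hr].
  - assert (K := short_step z (z - s) ltac:(lra) ltac:(lra) ltac:(lra)).
    replace (z - (z - s)) with s in K by ring.
    pose proof (H_le_M (z + (z - s)) ltac:(lra)). lra.
  - assert (K := short_step z (t - z) ltac:(lra) ltac:(lra) ltac:(lra)).
    replace (z + (t - z)) with t in K by ring.
    pose proof (H_le_M (z - (t - z)) ltac:(lra)). lra.
Qed.

Lemma max_shift_left (z : R) : s <= z - h -> z + h <= t -> H z = M -> H (z - h) = M.
Proof.
  intros Hl Hr HzM.
  assert (K := long_step z Hl Hr).
  pose proof (H_le_M (z - h) ltac:(lra)). pose proof (H_le_M (z + h) ltac:(lra)). lra.
Qed.

Lemma max_le_by_steps (N : nat) (z : R) : s <= z <= t -> H z = M ->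
  z - s <= INR N * h -> M <= w.
Proof.
  revert z. induction N as [|N IH]; intros z Hz HzM HN.
  - apply (max_near_boundary_le z); auto. simpl in HN. lra.
  - destruct (Rle_dec (z - s) h) as [Hl | Hl]; [apply (max_near_boundary_le z); auto|].
    destruct (Rle_dec (t - z) h) as [Hr | Hr]; [apply (max_near_boundary_le z); auto|].
    apply (IH (z - h)); [lra | apply max_shift_left; lra |].
    rewrite S_INR in HN. lra.
Qed.

End DiscreteMaximumPrinciple.

Lemma discrete_maximum_principle (H : R -> R) (s t h w : R) :
  s <= t -> 0 < h -> (forall y, s <= y <= t -> continuity_pt H y) ->
  H s <= 0 -> H t <= 0 ->
  (forall z, s <= z - h -> z + h <= t -> 0 <= H (z - h) - 2 * H z + H (z + h)) ->
  (forall z u, 0 <= u <= h -> s <= z - u -> z + u <= t -> - w <= H (z - u) - 2 * H z + H (z + u)) ->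
  forall y, s <= y <= t -> H y <= w.
Proof.
  intros Hst Hh Hc Hs Ht Hlong Hshort y Hy.
  destruct (continuity_ab_maj H s t Hst Hc) as [z [Hmax Hz]].
  destruct (nfloor_ex ((t - s) / h)) as [N [_ HN]]; [apply Rdiv_le_0_compat; lra|].
  assert (Hsteps : z - s <= INR (S N) * h).
  { rewrite S_INR. apply Rmult_lt_compat_r with (r := h) in HN; [|exact Hh].
    replace ((t - s) / h * h) with (t - s) in HN by (field; lra). lra. }
  assert (Hzw := max_le_by_steps H s t h w (H z) Hh Hmax Hs Ht Hlong Hshort (S N) z Hz eq_refl Hsteps).
  pose proof (Hmax y Hy). lra.
Qed.

Lemma chord_minus_value_le (G : R -> R) (s t x h w : R) :
  s < t -> s <= x <= t -> 0 < h ->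
  (forall y, s <= y <= t -> continuity_pt G y) ->
  (forall y u, 0 <= u <= h -> s <= y - u -> y + u <= t -> G (y - u) - 2 * G y + G (y + u) <= w) ->
  (t - x) * G s + (x - s) * G t - (t - s) * G x
    <= (t - s) * w * (1 + (x - s) * (t - x) / (2 * h ^ 2)).
Proof.
  intros Hst Hx Hh Hc Hw.
  assert (Hw0 : 0 <= w).
  { assert (K := Hw s 0 ltac:(lra) ltac:(lra) ltac:(lra)).
    rewrite Rminus_0_r, Rplus_0_r in K. lra. }
  (* The parabolic correction makes the second differences of [H] nonnegative at step [h]. *)
  set (P := fun y => ((t - y) * G s + (y - s) * G t) / (t - s) - w * (y - s) * (t - y) / (2 * h ^ 2)).
  set (H := fun y => P y - G y).
  assert (HD : forall z u, H (z - u) - 2 * H z + H (z + u)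
      = w * u ^ 2 / h ^ 2 - (G (z - u) - 2 * G z + G (z + u))).
  { intros z u. unfold H, P. field. split; lra. }
  assert (Hu2 : forall u, 0 <= w * u ^ 2 / h ^ 2)
    by (intro u; apply Rmult_le_pos; [apply Rmult_le_pos; [lra | apply pow2_ge_0]
                                     | apply Rlt_le, Rinv_0_lt_compat, pow_lt; lra]).
  assert (HxH : H x <= w).
  { apply (discrete_maximum_principle H s t h w); try lra.
    - intros y Hy. apply (continuity_pt_minus P G); [unfold P; reg | apply Hc, Hy].
    - unfold H, P. apply Req_le. field. split; lra.
    - unfold H, P. apply Req_le. field. split; lra.
    - intros z Hl Hr. rewrite HD.
      replace (w * h ^ 2 / h ^ 2) with w by (field; lra).
      pose proof (Hw z h ltac:(lra) Hl Hr). lra.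
    - intros z u Hu Hl Hr. rewrite HD.
      pose proof (Hw z u Hu Hl Hr). pose proof (Hu2 u). lra. }
  unfold H, P in HxH.
  apply Rmult_le_compat_l with (r := t - s) in HxH; [|lra].
  replace ((t - s) * (((t - x) * G s + (x - s) * G t) / (t - s)
    - w * (x - s) * (t - x) / (2 * h ^ 2) - G x))
    with ((t - x) * G s + (x - s) * G t - (t - s) * G x
          - (t - s) * w * ((x - s) * (t - x) / (2 * h ^ 2))) in HxH by (field; lra).
  lra.
Qed.

Lemma supporting_line (g : R -> R) (a b x : R) : a < x < b -> g x <= 0 ->
  (forall s t, a <= s < x -> x < t <= b -> (x - s) * g t + (t - x) * g s <= 0) ->
  exists c, forall y, a <= y <= b -> g y <= c * (y - x).
Proof.
  intros Hx Hgx Hchord.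
  set (slopes := fun r => exists t, x < t <= b /\ r = g t / (t - x)).
  assert (Hub : forall s, a <= s < x -> is_upper_bound slopes (- g s / (x - s))).
  { intros s Hs r [t [Ht ->]].
    assert (K := Hchord s t Hs Ht).
    apply Rmult_le_reg_r with (r := (x - s) * (t - x)); [apply Rmult_lt_0_compat; lra|].
    replace (g t / (t - x) * ((x - s) * (t - x))) with ((x - s) * g t) by (field; lra).
    replace (- g s / (x - s) * ((x - s) * (t - x))) with (- ((t - x) * g s)) by (field; lra).
    lra. }
  destruct (completeness slopes) as [c [Hc_ub Hc_least]].
  - exists (- g a / (x - a)). apply Hub. lra.
  - exists (g b / (b - x)), b. split; [lra | reflexivity].
  - exists c. intros y Hy. destruct (Rtotal_order y x) as [Hlt | [-> | Hgt]].
    + assert (K := Hc_least _ (Hub y ltac:(lra))).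
      apply Rmult_le_compat_r with (r := x - y) in K; [|lra].
      replace (- g y / (x - y) * (x - y)) with (- g y) in K by (field; lra). lra.
    + lra.
    + assert (K : g y / (y - x) <= c) by (apply Hc_ub; exists y; split; [lra | reflexivity]).
      apply Rmult_le_compat_r with (r := y - x) in K; [|lra].
      replace (g y / (y - x) * (y - x)) with (g y) in K by (field; lra). lra.
Qed.

Lemma quadratic_majorant (F : R -> R) (a b x h w : R) :
  a < x < b -> 0 < h -> (forall y, a <= y <= b -> continuity_pt F y) ->
  (forall y u, 0 <= u <= h -> a <= y - u -> y + u <= b -> F (y - u) - 2 * F y + F (y + u) <= w) ->
  exists c, forall y, a <= y <= b ->
    F y <= F x + w + c * (y - x) + w / (2 * h ^ 2) * (y - x) ^ 2.
Proof.
  intros Hx Hh Hc Hw.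
  assert (Hw0 : 0 <= w).
  { assert (K := Hw x 0 ltac:(lra) ltac:(lra) ltac:(lra)).
    rewrite Rminus_0_r, Rplus_0_r in K. lra. }
  set (g := fun y => F y - (F x + w + w / (2 * h ^ 2) * (y - x) ^ 2)).
  destruct (supporting_line g a b x) as [c Hline]; [exact Hx | unfold g; lra | |].
  - intros s t Hs Ht.
    assert (K := chord_minus_value_le F s t x h w ltac:(lra) ltac:(lra) Hh
      (fun y Hy => Hc y ltac:(lra)) (fun y u Hu Hl Hr => Hw y u Hu ltac:(lra) ltac:(lra))).
    replace ((x - s) * g t + (t - x) * g s)
      with ((t - x) * F s + (x - s) * F t - (t - s) * F x
            - (t - s) * w * (1 + (x - s) * (t - x) / (2 * h ^ 2))) by (unfold g; field; lra).
    lra.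
  - exists c. intros y Hy. assert (K := Hline y Hy). unfold g in K. lra.
Qed.

Lemma bernstein_ab_sub_le (F : R -> R) (a b x w : R) (n : nat) :
  (1 <= n)%nat -> a < b -> a <= x <= b -> (forall y, a <= y <= b -> continuity_pt F y) ->
  (forall y u, 0 <= u <= sqrt ((x - a) * (b - x) / INR n) -> a <= y - u -> y + u <= b ->
     F (y - u) - 2 * F y + F (y + u) <= w) ->
  bernstein_ab a b n F x - F x <= 3 / 2 * w.
Proof.
  intros Hn Hab Hx Hc Hw.
  assert (Hw0 : 0 <= w).
  { assert (K := Hw a 0 ltac:(split; [lra | apply sqrt_pos]) ltac:(lra) ltac:(lra)).
    rewrite Rminus_0_r, Rplus_0_r in K. lra. }
  destruct (Req_dec x a) as [-> | Hxa]; [rewrite bernstein_ab_left by auto; lra|].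
  destruct (Req_dec x b) as [-> | Hxb]; [rewrite bernstein_ab_right by auto; lra|].
  assert (Hq : 0 < (x - a) * (b - x) / INR n)
    by (apply Rdiv_lt_0_compat; [apply Rmult_lt_0_compat | apply lt_0_INR]; lra || lia).
  set (h := sqrt ((x - a) * (b - x) / INR n)) in *.
  assert (Hh : 0 < h) by (apply sqrt_lt_R0, Hq).
  assert (Hh2 : h ^ 2 = (x - a) * (b - x) / INR n)
    by (unfold h; rewrite <- Rsqr_pow2; apply Rsqr_sqrt; lra).
  destruct (quadratic_majorant F a b x h w ltac:(lra) Hh Hc Hw) as [c Hmaj].
  eapply Rle_trans.
  { apply Rplus_le_compat_r, (bernstein_ab_le _ _ a b x n Hn Hab Hx Hmaj). }
  rewrite bernstein_ab_quadratic, <- Hh2 by auto.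
  apply Req_le. field. lra.
Qed.

Lemma bernstein_ab_error_le (F : R -> R) (a b x w : R) (n : nat) :
  (1 <= n)%nat -> a < b -> a <= x <= b -> (forall y, a <= y <= b -> continuity_pt F y) ->
  (forall y u, 0 <= u <= sqrt ((x - a) * (b - x) / INR n) -> a <= y - u -> y + u <= b ->
     Rabs (F (y - u) - 2 * F y + F (y + u)) <= w) ->
  Rabs (bernstein_ab a b n F x - F x) <= 3 / 2 * w.
Proof.
  intros Hn Hab Hx Hc Hw. apply Rabs_le. split.
  - assert (K := bernstein_ab_sub_le (fun y => - F y) a b x w n Hn Hab Hx
      (fun y Hy => continuity_pt_opp F y (Hc y Hy))).
    rewrite bernstein_ab_opp in K.
    enough (- bernstein_ab a b n F x - - F x <= 3 / 2 * w) by lra.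
    apply K. intros y u Hu Hl Hr.
    pose proof (Rabs_le_between (F (y - u) - 2 * F y + F (y + u)) w) as [Hbetween _].
    specialize (Hbetween (Hw y u Hu Hl Hr)). lra.
  - apply bernstein_ab_sub_le; auto. intros y u Hu Hl Hr.
    eapply Rle_trans; [apply Rle_abs | apply Hw; auto].
Qed.

Definition clamp01 (y : R) : R := Rmax 0 (Rmin 1 y).

Lemma clamp01_in (y : R) : 0 <= clamp01 y <= 1.
Proof. unfold clamp01, Rmax, Rmin. repeat destruct Rle_dec; lra. Qed.

Lemma clamp01_id (y : R) : 0 <= y <= 1 -> clamp01 y = y.
Proof. intros Hy. unfold clamp01, Rmax, Rmin. repeat destruct Rle_dec; lra. Qed.

Lemma clamp01_dist_le (y z : R) : Rabs (clamp01 y - clamp01 z) <= Rabs (y - z).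
Proof.
  unfold clamp01, Rmax, Rmin. repeat destruct Rle_dec; unfold Rabs; repeat destruct Rcase_abs; lra.
Qed.

Lemma continuity_pt_clamp01 (f : R -> R) : continuous_on_01 f ->
  forall y, continuity_pt (fun z => f (clamp01 z)) y.
Proof.
  intros Hf y. unfold continuity_pt, continue_in, limit1_in, limit_in. simpl. unfold R_dist.
  intros eps Heps.
  destruct (Hf (clamp01 y) (clamp01_in y) eps Heps) as [d [Hd Hclose]].
  exists d. split; [exact Hd|]. intros z [_ Hz].
  apply Hclose; [apply clamp01_in|]. eapply Rle_lt_trans; [apply clamp01_dist_le | exact Hz].
Qed.

Lemma continuous_on_01_bounded (f : R -> R) : continuous_on_01 f ->
  exists lo hi, forall y, 0 <= y <= 1 -> lo <= f y <= hi.
Proof.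
  intros Hf.
  assert (Hc : forall y, 0 <= y <= 1 -> continuity_pt (fun z => f (clamp01 z)) y)
    by (intros y _; apply continuity_pt_clamp01, Hf).
  destruct (continuity_ab_maj _ 0 1 ltac:(lra) Hc) as [ymax [Hmax _]].
  destruct (continuity_ab_min _ 0 1 ltac:(lra) Hc) as [ymin [Hmin _]].
  exists (f (clamp01 ymin)), (f (clamp01 ymax)). intros y Hy.
  rewrite <- (clamp01_id y Hy). split; [apply Hmin | apply Hmax]; exact Hy.
Qed.

Lemma omega2_ub (f : R -> R) (d r : R) : continuous_on_01 f -> omega2_set f d r ->
  r <= omega2 f d.
Proof.
  intros Hf Hr.
  destruct (continuous_on_01_bounded f Hf) as [lo [hi Hbd]].
  assert (Hset_ub : forall r', omega2_set f d r' -> r' <= 2 * (hi - lo)).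
  { intros r' [y [u [H1 [H2 [H3 [H4 [_ ->]]]]]]].
    pose proof (Hbd (y - u) ltac:(lra)). pose proof (Hbd y ltac:(lra)).
    pose proof (Hbd (y + u) ltac:(lra)). apply Rabs_le. lra. }
  destruct (Lub_Rbar_correct (omega2_set f d)) as [Hub Hleast].
  unfold omega2. destruct (Lub_Rbar (omega2_set f d)) as [l | |]; simpl in *.
  - exact (Hub r Hr).
  - destruct (Hleast (Finite (2 * (hi - lo))) Hset_ub).
  - destruct (Hub r Hr).
Qed.

Lemma omega2_ge0 (f : R -> R) (d : R) : continuous_on_01 f -> 0 <= d -> 0 <= omega2 f d.
Proof.
  intros Hf Hd. apply omega2_ub; [exact Hf|].
  exists 0, 0. rewrite Rminus_0_r, Rplus_0_r, Rabs_R0. repeat split; try lra.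
  replace (f 0 - 2 * f 0 + f 0) with 0 by ring. rewrite Rabs_R0. reflexivity.
Qed.

Lemma bernstein_ab_error_omega2 (f : R -> R) (a b x : R) (n : nat) :
  (1 <= n)%nat -> 0 <= a -> a < b -> b <= 1 -> continuous_on_01 f -> a <= x <= b ->
  Rabs (bernstein_ab a b n f x - f x) <= 3 / 2 * omega2 f (sqrt ((x - a) * (b - x) / INR n)).
Proof.
  intros Hn Ha Hab Hb Hf Hx.
  set (F := fun y => f (clamp01 y)).
  rewrite (bernstein_ab_ext f F a b x n Hn ltac:(lra));
    [| intros y Hy; unfold F; rewrite clamp01_id; [reflexivity | lra]].
  replace (f x) with (F x) by (unfold F; rewrite clamp01_id; [reflexivity | lra]).
  apply bernstein_ab_error_le; auto.
  - intros y _. apply continuity_pt_clamp01, Hf.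
  - intros y u Hu Hl Hr. unfold F. rewrite !clamp01_id by lra.
    apply omega2_ub; [exact Hf|].
    exists y, u. repeat split; try lra. rewrite Rabs_right; lra.
Qed.

Lemma piece_bounds (m k : nat) : (1 <= k <= m)%nat ->
  0 <= (INR k - 1) / INR m /\ (INR k - 1) / INR m < INR k / INR m /\ INR k / INR m <= 1.
Proof.
  intros Hk.
  assert (Hm : 0 < INR m) by (apply lt_0_INR; lia).
  assert (1 <= INR k) by (apply (le_INR 1); lia).
  assert (INR k <= INR m) by (apply le_INR; lia).
  split; [|split].
  - apply Rdiv_le_0_compat; lra.
  - apply Rmult_lt_compat_r; [apply Rinv_0_lt_compat |]; lra.
  - apply Rmult_le_reg_r with (r := INR m); [lra|]. field_simplify; lra.
Qed.

(* [piece_index] picks the right-hand piece at an interior break point. *)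
Lemma piece_index_cases (m k : nat) (x : R) : (1 <= k <= m)%nat ->
  (INR k - 1) / INR m <= x <= INR k / INR m ->
  piece_index m x = k \/ (x = INR k / INR m /\ (k < m)%nat /\ piece_index m x = S k).
Proof.
  intros Hk [Hxl Hxr]. assert (Hm : 0 < INR m) by (apply lt_0_INR; lia).
  set (y := INR m * x).
  assert (Hy1 : INR k - 1 <= y).
  { unfold y. apply Rmult_le_compat_l with (r := INR m) in Hxl; [|lra].
    replace (INR m * ((INR k - 1) / INR m)) with (INR k - 1) in Hxl by (field; lra). lra. }
  assert (Hy2 : y <= INR k).
  { unfold y. apply Rmult_le_compat_l with (r := INR m) in Hxr; [|lra].
    replace (INR m * (INR k / INR m)) with (INR k) in Hxr by (field; lra). lra. }
  destruct (archimed y) as [Hup1 Hup2].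
  rewrite INR_IZR_INZ in Hy1, Hy2.
  unfold piece_index. fold y.
  destruct Hy2 as [Hlt | Heq].
  - left. assert (E : up y = Z.of_nat k).
    { assert (Z1 : (Z.of_nat k - 1 < up y)%Z) by (apply lt_IZR; rewrite minus_IZR; simpl; lra).
      assert (Z2 : (up y < Z.of_nat k + 1)%Z) by (apply lt_IZR; rewrite plus_IZR; simpl; lra).
      lia. }
    rewrite E, Nat2Z.id. lia.
  - assert (E : up y = (Z.of_nat k + 1)%Z).
    { assert (Z1 : (Z.of_nat k < up y)%Z) by (apply lt_IZR; lra).
      assert (Z2 : (up y < Z.of_nat k + 2)%Z) by (apply lt_IZR; rewrite plus_IZR; simpl; lra).
      lia. }
    rewrite E. replace (Z.to_nat (Z.of_nat k + 1)) with (S k) by lia.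
    destruct (Nat.eq_dec k m) as [-> | Hne]; [left; lia|].
    right. split; [|split; lia].
    unfold y in Heq. rewrite <- INR_IZR_INZ in Heq. rewrite <- Heq. field. lra.
Qed.

Theorem mainTheorem1 (n m : nat) (f : R -> R) :
  (1 <= n)%nat -> (1 <= m)%nat -> continuous_on_01 f ->
  forall (k : nat) (x : R), (1 <= k <= m)%nat ->
    (INR k - 1) / INR m <= x <= INR k / INR m ->
    Rabs (Bbar n m f x - f x) <=
      3 / 2 * omega2 f (sqrt ((x - (INR k - 1) / INR m) * (INR k / INR m - x) / INR n)).
Proof.
  intros Hn Hm Hf k x Hk Hx.
  destruct (piece_bounds m k Hk) as [Ha [Hab Hb]].
  unfold Bbar, B_nk.
  destruct (piece_index_cases m k x Hk Hx) as [-> | [Hxk [Hkm ->]]].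
  - apply bernstein_ab_error_omega2; auto.
  - destruct (piece_bounds m (S k) ltac:(lia)) as [_ [Hab' _]].
    assert (Hleft : (INR (S k) - 1) / INR m = x) by (rewrite Hxk, S_INR; unfold Rdiv; f_equal; ring).
    rewrite Hleft in *. rewrite bernstein_ab_left, Rminus_diag, Rabs_R0 by auto.
    apply Rmult_le_pos; [lra | apply omega2_ge0, sqrt_pos; exact Hf].
Qed.
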